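(* Let $G$ be a connected topological group and $\Gamma$ a dense subgroup of $G$. Let $H_1,\dots,H_n$ be subgroups of $\Gamma$ none of which is dense in $G$, and let $X=\bigcup_{i=1}^n a_iH_i$ with $a_i\in\Gamma$ be a finite union of cosets of the $H_i$. Then $\Gamma\setminus X$ is dense in $G$. *)

From HB Require Import structures.
From mathcomp Require Import all_boot all_order.
From mathcomp Require Import monoid.
From mathcomp Require Import all_classical all_reals topology.

Set Implicit Arguments.
Unset Strict Implicit.
Unset Printing Implicit Defensive.

Local Open Scope classical_set_scope.
Local Open Scope group_scope.

HB.mixin Record isTopologicalGroup G of Group G & Topological G := {
  mulg_continuous : continuous (fun xy : G * G => (xy.1 * xy.2)%g) ;
  invg_continuous : continuous (fun x : G => (x^-1)%g)
}.

#[short(type="topologicalGroupType")]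
HB.structure Definition TopologicalGroup :=
  {G of isTopologicalGroup G & Group G & Topological G}.

Definition is_subgroup (G : groupType) (S : set G) : Prop :=
  S 1%g /\ (forall x y, S x -> S y -> S (x * y)%g) /\ (forall x, S x -> S (x^-1)%g).

Definition lcoset (G : groupType) (a : G) (S : set G) : set G :=
  [set (a * s)%g | s in S].

(* The closure of a subgroup is a subgroup; if it has nonempty interior it is
   open, hence clopen, hence the whole group by connectedness.  So a subgroup
   that is not dense is nowhere dense, and so are its translates and finite
   unions of them; removing a nowhere dense set from a dense set leaves a dense
   set. *)

From HB Require Import structures.
From mathcomp Require Import all_boot all_order.
From mathcomp Require Import monoid.
From mathcomp Require Import all_classical all_reals topology.

Set Implicit Arguments.
Unset Strict Implicit.
Unset Printing Implicit Defensive.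

Local Open Scope classical_set_scope.

(* Equivalently, [closure A] has empty interior. *)
Definition nowhere_dense {T : topologicalType} (A : set T) : Prop := dense (~` closure A).

Section NowhereDense.
Variable T : topologicalType.
Implicit Types A B S : set T.

Lemma closure_preimage (U : topologicalType) (f : T -> U) (A : set U) :
  continuous f -> closure (f @^-1` A) `<=` f @^-1` closure A.
Proof.
move=> cf; rewrite closureE; apply: smallest_sub => [|x Ax]; last exact: subset_closure.
by apply: preimage_closed => [x _|]; [exact: cf | exact: closed_closure].
Qed.

Lemma denseT : dense [set: T].
Proof. by move=> O O0 _; rewrite setIT. Qed.

Lemma dense_closureT S : closure S = [set: T] -> dense S.
Proof.
move=> clS O [x Ox] oO.
have : closure S x by rewrite clS.
by move=> /(_ O (open_nbhs_nbhs (conj oO Ox))) [y [Sy Oy]]; exists y.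
Qed.

Lemma nowhere_denseNE A :
  ~ nowhere_dense A -> exists O, [/\ open O, O !=set0 & O `<=` closure A].
Proof.
by move=> /denseNE [O [[x [oO Ox]] /subsets_disjoint OA]]; exists O; split=> //; exists x.
Qed.

Lemma nowhere_dense0 : nowhere_dense (@set0 T).
Proof. by rewrite /nowhere_dense closure0 setC0; exact: denseT. Qed.

Lemma nowhere_denseU A B :
  nowhere_dense A -> nowhere_dense B -> nowhere_dense (A `|` B).
Proof.
move=> ndA ndB; rewrite /nowhere_dense closureU setCU.
by apply: denseI => //; rewrite openC; exact: closed_closure.
Qed.

Lemma nowhere_dense_bigcup (I : choiceType) (D : set I) (F : I -> set T) :
  finite_set D -> (forall i, D i -> nowhere_dense (F i)) ->
  nowhere_dense (\bigcup_(i in D) F i).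
Proof.
move=> finD ndF; rewrite -bigsetU_fset_set// big_seq.
elim/big_ind : _ => //; [exact: nowhere_dense0 | exact: nowhere_denseU |].
by move=> i; rewrite in_fset_set// inE; exact: ndF.
Qed.

Lemma dense_setD S A : dense S -> nowhere_dense A -> dense (S `\` A).
Proof.
move=> dS ndA O O0 oO.
have oOA : open (O `&` ~` closure A).
  by apply: openI => //; rewrite openC; exact: closed_closure.
have [x [[Ox nAx] Sx]] := dS _ (ndA O O0 oO) oOA.
by exists x; split=> //; split=> // /subset_closure.
Qed.

End NowhereDense.

Section TopologicalGroup.
Local Open Scope group_scope.
Variable G : topologicalGroupType.
Implicit Types (K S : set G) (a : G).

Lemma lmulg_continuous a : continuous (fun y : G => a * y).
Proof.
move=> y; have ay : (fun z : G => (a, z)) @ nbhs y --> nbhs (a, y).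
  by apply: cvg_pair; [exact: cvg_cst | exact: cvg_id].
exact: (cvg_comp _ _ ay (@mulg_continuous G (a, y))).
Qed.

Lemma lcosetE a S : lcoset a S = (fun y => a^-1 * y) @^-1` S.
Proof.
apply/seteqP; split=> [_ [s Ss <-]|y Sy]; first by rewrite /= mulKg.
by exists (a^-1 * y) => //; rewrite mulVKg.
Qed.

Lemma closure_subgroup S : is_subgroup S -> is_subgroup (closure S).
Proof.
move=> [S1 [SM SV]]; split; first exact: subset_closure.
split=> [x y cx cy B /(@mulg_continuous G (x, y))|x cx B /(@invg_continuous G x)].
  move=> [[A1 A2] /= [nA1 nA2] A12B].
  have [s [Ss A1s]] := cx _ nA1; have [t [St A2t]] := cy _ nA2.
  by exists (s * t); split; [exact: SM | exact: (A12B (s, t))].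
by move=> /cx [s [Ss Bs]]; exists s^-1; split; [exact: SV|].
Qed.

Lemma subgroup_open K V :
  is_subgroup K -> open V -> V !=set0 -> V `<=` K -> open K.
Proof.
move=> [_ [KM KV]] oV [v Vv] VK; rewrite openE => k Kk; change (nbhs k K).
have nV : nbhs (v * k^-1 * k) V by rewrite mulgVK; exact: open_nbhs_nbhs.
have Vk : nbhs k ((fun y => v * k^-1 * y) @^-1` V).
  exact: @lmulg_continuous (v * k^-1) k _ nV.
apply: filterS Vk => y /= Vy.
have -> : y = k * v^-1 * (v * k^-1 * y) by rewrite !mulgA mulgVK mulgV mul1g.
exact: KM (KM _ _ Kk (KV _ (VK _ Vv))) (VK _ Vy).
Qed.

Lemma connected_subgroupT K :
  connected [set: G] -> is_subgroup K -> open K -> closed K -> K = [set: G].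
Proof.
move=> conn sK oK cK; rewrite -[RHS](conn K) //.
- by exists 1; case: sK.
- by exists K => //; rewrite setTI.
- by exists K => //; rewrite setTI.
Qed.

Lemma subgroup_nowhere_dense K :
  connected [set: G] -> is_subgroup K -> ~ dense K -> nowhere_dense K.
Proof.
move=> conn sK ndK; apply: contrapT => /nowhere_denseNE [O [oO O0 OK]].
apply/ndK/dense_closureT/connected_subgroupT => //.
- exact: closure_subgroup.
- exact: subgroup_open (closure_subgroup sK) oO O0 OK.
- exact: closed_closure.
Qed.

Lemma lcoset_nowhere_dense a S : nowhere_dense S -> nowhere_dense (lcoset a S).
Proof.
move=> ndS O [x Ox] oO.
have oaO : open ((fun y => a * y) @^-1` O).
  by move: oO; apply: (proj1 (continuousP _)); exact: lmulg_continuous.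
have [|y [/= Oay nSy]] := ndS _ _ oaO; first by exists (a^-1 * x); rewrite /= mulVKg.
exists (a * y); split=> //; rewrite lcosetE.
by move=> /(closure_preimage (@lmulg_continuous a^-1)); rewrite /= mulKg.
Qed.

End TopologicalGroup.

Theorem lemma5p2 (G : topologicalGroupType) (Gamma : set G) (n : nat)
    (H : 'I_n -> set G) (a : 'I_n -> G) :
  connected [set: G] ->
  is_subgroup Gamma -> dense Gamma ->
  (forall i, is_subgroup (H i) /\ H i `<=` Gamma /\ ~ dense (H i)) ->
  (forall i, Gamma (a i)) ->
  dense (Gamma `\` \bigcup_(i in [set: 'I_n]) lcoset (a i) (H i)).
Proof.
move=> conn _ dGamma Hi _; apply: dense_setD dGamma _.
apply: nowhere_dense_bigcup => [|i _]; first exact: finite_finset.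
have [sH [_ ndH]] := Hi i.
exact/lcoset_nowhere_dense/subgroup_nowhere_dense.
Qed.
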